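(* Let $K$ be a field, $Q$ the bipartite type $A$ quiver with vertices $y_0,x_1,\dots,x_n,y_n$ and arrows $\alpha_i\colon x_i\to y_{i-1}$, $\beta_i\colon x_i\to y_i$, and $\mathbf{d}$ a dimension vector. For every $V\in\mathrm{rep}_Q(\mathbf{d})$ and all $1\le i,j\le 2n+1$, the rank of $\zeta(V)_{i\times j}$ depends only on the $\mathbf{GL}(\mathbf{d})$-orbit of $V$.
   Context: $\mathrm{rep}_Q(\mathbf{d})$ is the space of tuples $V=(V_a)$ with $V_a\in\mathrm{Mat}_{\mathbf{d}(ha)\times\mathbf{d}(ta)}(K)$, with $\mathbf{GL}(\mathbf{d})=\prod_v\mathbf{GL}_{\mathbf{d}(v)}(K)$ acting by $g\cdot V=(g_{ha}V_ag_{ta}^{-1})$. $M_Q(V)$ is the block matrix with block rows $y_0,\dots,y_n$ (top to bottom) and block columns $x_n,\dots,x_1$ (left to right), with $V_{\alpha_i}$ in block $(y_{i-1},x_i)$, $V_{\beta_i}$ in block $(y_i,x_i)$, zero elsewhere. With $d_x=\sum\mathbf{d}(x_i)$, $d_y=\sum\mathbf{d}(y_i)$, $\zeta(V)=\begin{pmatrix}M_Q(V)&\mathbf{1}_{d_y}\\ \mathbf{1}_{d_x}&0\end{pmatrix}$. Rows of $\zeta(V)$ are split into $2n+1$ blocks of sizes $\mathbf{d}(y_0),\dots,\mathbf{d}(y_n),\mathbf{d}(x_n),\dots,\mathbf{d}(x_1)$, columns into $2n+1$ blocks of sizes $\mathbf{d}(x_n),\dots,\mathbf{d}(x_1),\mathbf{d}(y_0),\dots,\mathbf{d}(y_n)$,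 numbered $1,\dots,2n+1$; $Z_{i\times j}$ is the submatrix of block rows $1,\dots,i$ and block columns $1,\dots,j$. *)

From HB Require Import structures.
From mathcomp Require Import all_boot all_order all_algebra.
Set Implicit Arguments. Unset Strict Implicit. Unset Printing Implicit Defensive.
Import GRing.Theory.
Local Open Scope ring_scope.

(* Dimension vector: dx i = d(x_i) (1<=i<=n), dy i = d(y_i) (0<=i<=n);
   values of dx, dy at other indices are never used.
   Arrows are indexed by k : 'I_n, standing for i = k+1. *)

Section Rep.
Variables (K : fieldType) (n : nat) (dx dy : nat -> nat).

Definition ylo (k : 'I_n) : 'I_n.+1 := widen_ord (leqnSn n) k.
Definition yhi (k : 'I_n) : 'I_n.+1 := @Ordinal n.+1 k.+1 (ltn_ord k).

Record rep := Rep {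
  Valpha : forall k : 'I_n, 'M[K]_(dy k, dx k.+1);
  Vbeta  : forall k : 'I_n, 'M[K]_(dy k.+1, dx k.+1)
}.

Definition gl_act (gx : forall k : 'I_n, 'M[K]_(dx k.+1))
                  (gy : forall k : 'I_n.+1, 'M[K]_(dy k)) (V : rep) : rep :=
  Rep (fun k => gy (ylo k) *m Valpha V k *m invmx (gx k))
      (fun k => gy (yhi k) *m Vbeta V k *m invmx (gx k)).

Definition mxnat p q (M : 'M[K]_(p, q)) (r c : nat) : K :=
  match @insub nat (fun t => (t < p)%N) 'I_p r, @insub nat (fun t => (t < q)%N) 'I_q c with
  | Some r', Some c' => M r' c'
  | _, _ => 0
  end.

Definition alpha_at (V : rep) (i r c : nat) : K :=
  match @insub nat (fun t => (t < n)%N) 'I_n i.-1 with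
  | Some k => if (1 <= i)%N then mxnat (Valpha V k) r c else 0
  | None => 0 end.
Definition beta_at (V : rep) (i r c : nat) : K :=
  match @insub nat (fun t => (t < n)%N) 'I_n i.-1 with
  | Some k => if (1 <= i)%N then mxnat (Vbeta V k) r c else 0
  | None => 0 end.

(* Block sizes of zeta(V), blocks numbered 0..2n (paper: 1..2n+1).
   Row blocks:    y_0, ..., y_n, x_n, ..., x_1.
   Column blocks: x_n, ..., x_1, y_0, ..., y_n. *)
Definition rsz (a : nat) : nat := if (a <= n)%N then dy a else dx (n.*2.+1 - a).
Definition csz (b : nat) : nat := if (b < n)%N then dx (n - b) else dy (b - n).

(* Block (a, b) of zeta(V) = [[M_Q(V), 1_{d_y}], [1_{d_x}, 0]]. *)
Definition zeta_block (V : rep) (a b : nat) : 'M[K]_(rsz a, csz b) :=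
  \matrix_(r < rsz a, c < csz b)
    if (a <= n)%N then
      if (b < n)%N then
        (* row y_a, column x_i with i = n - b: M_Q(V) block *)
        (if (n - b == a.+1)%N then alpha_at V (n - b) r c else 0)
        + (if (n - b == a)%N then beta_at V (n - b) r c else 0)
      else
        (if (b - n == a)%N then (r == c :> nat)%:R else 0)
    else
      if (b < n)%N then (* row x_{2n+1-a}, column x_{n-b}: identity 1_{d_x} *)
        (if (a - n.+1 == b)%N then (r == c :> nat)%:R else 0)
      else 0.

Definition zeta (V : rep) :=
  \mxblock_(a < n.*2.+1, b < n.*2.+1) zeta_block V a b.

Definition Zsub (V : rep) (i j : nat) :=
  \mxblock_(a < i, b < j) zeta_block V a b.

End Rep.

From HB Require Import structures.
From mathcomp Require Import all_boot all_order all_algebra zify.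
Set Implicit Arguments. Unset Strict Implicit. Unset Printing Implicit Defensive.
Import GRing.Theory.
Local Open Scope ring_scope.

(* Label each block row of zeta(V) by its vertex (y_0..y_n, x_n..x_1) and each
   block column likewise (x_n..x_1, y_0..y_n).  Blockwise,
   zeta(g.V) = diag(g_row) * zeta(V) * diag(g_col^-1): the M_Q(V) blocks are
   exactly g_{ha} V_a g_{ta}^-1, and every identity block sits at a pair of
   equal vertices, where g g^-1 = 1.  Both factors are block diagonal and
   invertible, so they restrict to invertible factors of every leading block
   submatrix Z_{i x j}, which therefore keeps its rank. *)

Section BlockEquivalence.
Variable K : fieldType.

Lemma mxrank_mulUmx m n (D : 'M[K]_m) (A : 'M[K]_(m, n)) :
  D \in unitmx -> \rank (D *m A) = \rank A.
Proof.
move=> uD; rewrite -mxrank_tr trmx_mul mxrankMfree ?mxrank_tr //.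
by rewrite row_free_unit unitmx_tr.
Qed.

Lemma mxdiag_unitmx p (pp : 'I_p -> nat) (D : forall i, 'M[K]_(pp i)) :
  (forall i, D i \in unitmx) -> \mxdiag_i D i \in unitmx.
Proof.
move=> uD; rewrite -row_free_unit /row_free rank_mxdiag.
by apply/eqP; apply: eq_bigr => i _; rewrite mxrank_unit.
Qed.

Lemma mxrank_mxblock_equiv (p q : nat) (r : 'I_p -> nat) (c : 'I_q -> nat)
  (A B : forall a b, 'M[K]_(r a, c b)) (L : forall a, 'M[K]_(r a))
  (R : forall b, 'M[K]_(c b)) :
  (forall a, L a \in unitmx) -> (forall b, R b \in unitmx) ->
  (forall a b, B a b = L a *m A a b *m R b) ->
  \rank (\mxblock_(a, b) A a b) = \rank (\mxblock_(a, b) B a b).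
Proof.
move=> uL uR eB.
have -> : \mxblock_(a, b) B a b =
          \mxdiag_a L a *m \mxblock_(a, b) A a b *m \mxdiag_b R b.
  rewrite mul_mxdiag_mxblock mul_mxblock_mxdiag.
  by apply: eq_mxblock => a b; rewrite eB.
rewrite mxrankMfree ?mxrank_mulUmx ?row_free_unit //; exact: mxdiag_unitmx.
Qed.

End BlockEquivalence.

(* The block sizes rsz/csz are not syntactically the dimensions of the V_a or
   the g_v, so matrices are transported between them by reading entries at
   natural indices; [resize_mx] is a genuine cast whenever the sizes agree. *)
Section ResizeMatrix.
Variable K : fieldType.

Definition resize_mx p q s t (M : 'M[K]_(p, q)) : 'M[K]_(s, t) :=
  \matrix_(r < s, c < t) mxnat M r c.

Lemma mxnatE p q (M : 'M[K]_(p, q)) r c (hr : (r < p)%N) (hc : (c < q)%N) :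
  mxnat M r c = M (Ordinal hr) (Ordinal hc).
Proof.
by rewrite /mxnat (insubT (fun t => (t < p)%N) hr) (insubT (fun t => (t < q)%N) hc).
Qed.

Lemma mxnat_ord p q (M : 'M[K]_(p, q)) (r : 'I_p) (c : 'I_q) :
  mxnat M r c = M r c.
Proof. by rewrite /mxnat !valK. Qed.

Lemma mxnat_outr p q (M : 'M[K]_(p, q)) r c : (p <= r)%N -> mxnat M r c = 0.
Proof. by move=> h; rewrite /mxnat (insubN (ordinal p)) // -leqNgt. Qed.

Lemma mxnat_outc p q (M : 'M[K]_(p, q)) r c : (q <= c)%N -> mxnat M r c = 0.
Proof.
move=> h; rewrite /mxnat (insubN (ordinal q) (_ : ~~ (c < q)%N)) -?leqNgt //.
by case: insub.
Qed.

Lemma mxnat_mulmx p q w (A : 'M[K]_(p, q)) (B : 'M[K]_(q, w)) r c :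
  mxnat (A *m B) r c = \sum_(t < q) mxnat A r t * mxnat B t c.
Proof.
have [hr|hr] := ltnP r p; last first.
  by rewrite mxnat_outr // big1 // => t _; rewrite (mxnat_outr A) ?mul0r.
have [hc|hc] := ltnP c w; last first.
  by rewrite mxnat_outc // big1 // => t _; rewrite (mxnat_outc B) ?mulr0.
rewrite mxnatE mxE; apply: eq_bigr => t _.
rewrite (mxnatE A hr (ltn_ord t)) (mxnatE B (ltn_ord t) hc).
by have -> : Ordinal (ltn_ord t) = t by apply: val_inj.
Qed.

Lemma resize_mxM p q w s u m (A : 'M[K]_(p, q)) (B : 'M[K]_(q, w)) :
  m = q -> resize_mx s m A *m resize_mx m u B = resize_mx s u (A *m B).
Proof.
move=> ->; apply/matrixP => r c; rewrite !mxE mxnat_mulmx.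
by apply: eq_bigr => t _; rewrite !mxE.
Qed.

Lemma resize_mx_id p q (A : 'M[K]_(p, q)) : resize_mx p q A = A.
Proof. by apply/matrixP => r c; rewrite mxE mxnat_ord. Qed.

Lemma resize_unitmx p s (A : 'M[K]_p) :
  p = s -> A \in unitmx -> resize_mx s s A \in unitmx.
Proof. by move=> e; subst s; rewrite resize_mx_id. Qed.

Lemma resize_mx1 p p' s t : p = p' ->
  resize_mx s t (1%:M : 'M[K]_p) = resize_mx s t (1%:M : 'M[K]_p').
Proof. by move=> ->. Qed.

End ResizeMatrix.

Section ZetaBlocks.
Variables (K : fieldType) (n : nat) (dx dy : nat -> nat).
Implicit Type W : rep K n dx dy.

Lemma alpha_atE W (k : 'I_n) r c :
  alpha_at W k.+1 r c = mxnat (Valpha W k) r c.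
Proof. by rewrite /alpha_at /= valK. Qed.

Lemma beta_atE W (k : 'I_n) r c :
  beta_at W k.+1 r c = mxnat (Vbeta W k) r c.
Proof. by rewrite /beta_at /= valK. Qed.

Lemma zeta_block_MQ W a b (k : 'I_n) : (a <= n)%N -> k.+1 = (n - b)%N ->
  zeta_block W a b =
    (if k == a :> nat then resize_mx _ _ (Valpha W k) else 0)
  + (if k.+1 == a then resize_mx _ _ (Vbeta W k) else 0).
Proof.
move=> ha ek; have hb : (b < n)%N by lia.
apply/matrixP => r c; rewrite !mxE ha hb -ek alpha_atE beta_atE eqSS.
by case: eqP => _; case: eqP => _; rewrite ?mxE ?add0r ?addr0.
Qed.

Lemma zeta_block_idy W a b : (a <= n)%N -> (n <= b)%N ->
  zeta_block W a b =
    if (b - n == a)%N then resize_mx _ _ (1%:M : 'M[K]_(dy a)) else 0.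
Proof.
move=> ha hb; apply/matrixP => r c; rewrite !mxE ha ltnNge hb /=.
case: eqP => e; rewrite !mxE //.
have hr : (r < dy a)%N.
  suff <- : rsz n dx dy a = dy a by [].
  by rewrite /rsz ha.
have hc : (c < dy a)%N.
  suff <- : csz n dx dy b = dy a by [].
  by rewrite /csz ltnNge hb /= e.
by rewrite (mxnatE _ hr hc) !mxE.
Qed.

Lemma zeta_block_idx W a b : (n < a)%N -> (b < n)%N ->
  zeta_block W a b =
    if (a - n.+1 == b)%N then resize_mx _ _ (1%:M : 'M[K]_(csz n dx dy b))
    else 0.
Proof.
move=> ha hb; apply/matrixP => r c; rewrite !mxE leqNgt ha hb /=.
case: eqP => e; rewrite !mxE //.
have hr : (r < csz n dx dy b)%N.
  suff <- : rsz n dx dy a = csz n dx dy b by [].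
  by rewrite /rsz /csz leqNgt ha hb; congr dx; lia.
by rewrite (mxnatE _ hr (ltn_ord c)) !mxE.
Qed.

Lemma zeta_block_zero W a b : (n < a)%N -> (n <= b)%N -> zeta_block W a b = 0.
Proof. by move=> ha hb; apply/matrixP => r c; rewrite !mxE leqNgt ha ltnNge hb. Qed.

End ZetaBlocks.

Section GLActionOnZeta.
Variables (K : fieldType) (n : nat) (dx dy : nat -> nat).
Variables (gx : forall k : 'I_n, 'M[K]_(dx k.+1))
          (gy : forall k : 'I_n.+1, 'M[K]_(dy k)).
Hypotheses (ux : forall k, gx k \in unitmx) (uy : forall k, gy k \in unitmx).

(* Row block a is y_a for a <= n and x_(2n+1-a), i.e. arrow index 2n-a,
   otherwise; column block b is x_(n-b) for b < n and y_(b-n) otherwise.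
   The fallback 1%:M is never reached for blocks of zeta(V). *)
Definition gl_row_factor a : 'M[K]_(rsz n dx dy a) :=
  if (a <= n)%N then resize_mx _ _ (gy (inord a))
  else oapp (fun k : 'I_n => resize_mx _ _ (gx k)) 1%:M (insub (n.*2 - a)%N).

Definition gl_col_factor b : 'M[K]_(csz n dx dy b) :=
  if (b < n)%N then
    oapp (fun k : 'I_n => resize_mx _ _ (invmx (gx k))) 1%:M (insub (n - b).-1)
  else resize_mx _ _ (invmx (gy (inord (b - n)))).

Lemma gl_row_factor_unitmx a : (a < n.*2.+1)%N -> gl_row_factor a \in unitmx.
Proof.
move=> h; rewrite /gl_row_factor; case: ifP => ha.
  by apply: resize_unitmx; [rewrite /rsz ha inordK //; lia | exact: uy].
case: insubP => [k _ ek|]; last by move=> /negP; lia.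
by apply: resize_unitmx; [rewrite /rsz ha ek; congr dx; lia | exact: ux].
Qed.

Lemma gl_col_factor_unitmx b : (b < n.*2.+1)%N -> gl_col_factor b \in unitmx.
Proof.
move=> h; rewrite /gl_col_factor; case: ifP => hb.
  case: insubP => [k _ ek|]; last by move=> /negP; lia.
  by apply: resize_unitmx; [rewrite /csz hb ek; congr dx; lia | rewrite unitmx_inv].
by apply: resize_unitmx; [rewrite /csz hb inordK //; lia | rewrite unitmx_inv].
Qed.

Variable V : rep K n dx dy.
Let gV := gl_act gx gy V.

Lemma zeta_block_gl_act_MQ a b : (a <= n)%N -> (b < n)%N ->
  zeta_block gV a b = gl_row_factor a *m zeta_block V a b *m gl_col_factor b.
Proof.
move=> ha hb; have hk : ((n - b).-1 < n)%N by lia.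
pose k := Ordinal hk; have ek : k.+1 = (n - b)%N by rewrite /=; lia.
rewrite /gl_row_factor /gl_col_factor ha hb (zeta_block_MQ gV ha ek).
rewrite (zeta_block_MQ V ha ek) -[(n - b).-1]/(val k) valK /=.
case: eqP => e1; case: eqP => e2; try lia;
  rewrite ?mulmxDr ?mulmxDl ?mulmx0 ?mul0mx ?addr0 ?add0r //.
- have -> : inord a = ylo k by apply: val_inj; rewrite /= inordK //; lia.
  by rewrite !resize_mxM //= /rsz /csz ?ha ?hb; [congr dx | congr dy]; lia.
- have -> : inord a = yhi k by apply: val_inj; rewrite /= inordK.
  by rewrite !resize_mxM //= /rsz /csz ?ha ?hb; [congr dx | congr dy]; lia.
Qed.

Lemma zeta_block_gl_act_idy a b : (a <= n)%N -> (n <= b)%N ->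
  zeta_block gV a b = gl_row_factor a *m zeta_block V a b *m gl_col_factor b.
Proof.
move=> ha hb; rewrite /gl_row_factor /gl_col_factor ha ltnNge hb /=.
rewrite !zeta_block_idy //; case: eqP => e; rewrite ?mulmx0 ?mul0mx //.
have ea : dy a = dy (@inord n a) by rewrite inordK //; lia.
rewrite e (resize_mx1 _ _ _ ea) !resize_mxM ?mulmx1 ?mulmxV // -ea.
  by rewrite /csz ltnNge hb e.
by rewrite /rsz ha.
Qed.

Lemma zeta_block_gl_act_idx a b : (n < a < n.*2.+1)%N -> (b < n)%N ->
  zeta_block gV a b = gl_row_factor a *m zeta_block V a b *m gl_col_factor b.
Proof.
move=> /andP[ha ha'] hb; rewrite /gl_row_factor /gl_col_factor leqNgt ha hb /=.
rewrite !zeta_block_idx //; case: eqP => e; rewrite ?mulmx0 ?mul0mx //.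
have hk : ((n - b).-1 < n)%N by lia.
pose k := Ordinal hk.
rewrite (_ : (n.*2 - a)%N = k); last by rewrite /=; lia.
rewrite -[(n - b).-1]/(val k) valK /=.
have ea : csz n dx dy b = dx k.+1 by rewrite /csz hb /=; congr dx; lia.
rewrite (resize_mx1 _ _ _ ea) !resize_mxM ?mulmx1 ?mulmxV //; first exact: (ux k).
by rewrite /rsz leqNgt ha /=; congr dx; lia.
Qed.

Lemma zeta_block_gl_act a b : (a < n.*2.+1)%N ->
  zeta_block gV a b = gl_row_factor a *m zeta_block V a b *m gl_col_factor b.
Proof.
move=> hA; have [ha|ha] := leqP a n; have [hb|hb] := ltnP b n.
- exact: zeta_block_gl_act_MQ.
- exact: zeta_block_gl_act_idy.
- by apply: zeta_block_gl_act_idx; rewrite ?ha.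
- by rewrite !zeta_block_zero // mulmx0 mul0mx.
Qed.

End GLActionOnZeta.

Theorem lemma4p2 (K : fieldType) (n : nat) (dx dy : nat -> nat)
  (V : rep K n dx dy)
  (gx : forall k : 'I_n, 'M[K]_(dx k.+1))
  (gy : forall k : 'I_n.+1, 'M[K]_(dy k)) :
  (forall k, gx k \in unitmx) -> (forall k, gy k \in unitmx) ->
  forall i j : nat, (1 <= i <= n.*2.+1)%N -> (1 <= j <= n.*2.+1)%N ->
  \rank (Zsub V i j) = \rank (Zsub (gl_act gx gy V) i j).
Proof.
move=> ux uy i j /andP[_ hi] /andP[_ hj].
have ha (a : 'I_i) : (a < n.*2.+1)%N by exact: leq_trans (ltn_ord a) hi.
have hb (b : 'I_j) : (b < n.*2.+1)%N by exact: leq_trans (ltn_ord b) hj.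
apply: (mxrank_mxblock_equiv (L := fun a : 'I_i => gl_row_factor gx gy a)
                             (R := fun b : 'I_j => gl_col_factor gx gy b)).
- by move=> a; apply: gl_row_factor_unitmx.
- by move=> b; apply: gl_col_factor_unitmx.
- by move=> a b; apply: zeta_block_gl_act.
Qed.
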